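(* Let $H=(E,\{X_i:i\in[n]\})$ be a multi-hypergraph and let $t_1,\dots,t_n$ be integers with $0\le t_i\le|X_i|$. Let $\rho=\sum_{i=1}^n r_{M_i}$ where $M_i=U_{t_i,X_i}\oplus U_{0,E-X_i}$. For a positive integer $k$, define a map $\phi$ on the set of proper $k$-colorings $c:[n]\to[k]$ of the line graph $G_H$ by $\phi(c)=(N_1,\dots,N_k)$, where for each $i\in[k]$ $$N_i=\Bigl(\bigoplus_{h\,:\,c(h)=i}U_{t_h,X_h}\Bigr)\oplus U_{0,Y},\qquad Y=E-\bigcup_{h\,:\,c(h)=i}X_h.$$ Then $\phi(c)\in\Delta_\rho^k$ for every such coloring $c$. Consequently $\chi(\rho)\le\chi(G_H)$. If moreover $H$ is a hypergraph and, for all $i\in[n]$, either $t_i=1$ or $0<t_i<|X_i|$, then $\phi$ is injective.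
   Context: A polymatroid on a finite set $E$ is a function $\rho:2^E\to\mathbb{Z}$ that is normalized, non-decreasing and submodular. A multi-hypergraph is a pair $H=(E,\mathcal{E})$ with $E$ finite and $\mathcal{E}=\{X_i:i\in[n]\}$ a finite multiset of subsets of $E$; it is a hypergraph if $\mathcal{E}$ is a set of nonempty subsets. The line graph $G_H$ has vertex set $[n]=\{1,\dots,n\}$, with $ij$ an edge iff $i\ne j$ and $X_i\cap X_j\ne\emptyset$. $U_{r,X}$ denotes the rank-$r$ uniform matroid on $X$. For a polymatroid $\rho$ on $E$ and positive integer $k$, $\Delta_\rho^k$ is the set of $k$-tuples $(N_1,\dots,N_k)$ of matroids on $E$ with $\rho=r_{N_1}+\cdots+r_{N_k}$. The chromatic number $\chi(\rho)$ of $\rho$ is the least positive integer $k$ with $\Delta_\rho^k\ne\emptyset$ ($\infty$ if none). *)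

From Stdlib Require Import ClassicalEpsilon.
From mathcomp Require Import all_boot.

Set Implicit Arguments.
Unset Strict Implicit.
Unset Printing Implicit Defensive.

Section Defs.
Variable E : finType.

Definition decP (P : Prop) : bool :=
  if excluded_middle_informative P then true else false.

Lemma decPP (P : Prop) : decP P = true <-> P.
Proof. by rewrite /decP; case: excluded_middle_informative. Qed.

Definition normalized (rho : {set E} -> nat) : Prop := rho set0 = 0.
Definition nondecreasing (rho : {set E} -> nat) : Prop :=
  forall A B : {set E}, A \subset B -> rho A <= rho B.
Definition submodular (rho : {set E} -> nat) : Prop :=
  forall A B : {set E}, rho (A :|: B) + rho (A :&: B) <= rho A + rho B.
Definition is_polymatroid (rho : {set E} -> nat) : Prop :=
  [/\ normalized rho, nondecreasing rho & submodular rho].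

Definition is_matroid_rank (r : {set E} -> nat) : Prop :=
  [/\ forall A : {set E}, r A <= #|A|, nondecreasing r & submodular r].

(* Rank function of the uniform matroid U_{t,X} (evaluated on subsets of X). *)
Definition unif_rank (t : nat) (A : {set E}) : nat := minn t #|A|.

(* Direct sum of matroids given as (ground set, rank function) pairs whose
   ground sets partition E: r(A) = sum_j r_j (A \cap E_j). *)
Definition dsum (s : seq ({set E} * ({set E} -> nat))) (A : {set E}) : nat :=
  \sum_(p <- s) p.2 (A :&: p.1).

Definition in_Delta (rho : {set E} -> nat) (k : nat)
    (N : 'I_k -> {set E} -> nat) : Prop :=
  (forall i, is_matroid_rank (N i)) /\
  (forall A : {set E}, rho A = \sum_(i < k) N i A).

Definition Delta_nonempty (rho : {set E} -> nat) (k : nat) : Prop :=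
  exists N : 'I_k -> {set E} -> nat, in_Delta rho N.

(* chromatic number of a polymatroid: None encodes infinity *)
Definition chi_poly (rho : {set E} -> nat) : option nat :=
  match excluded_middle_informative
          (exists k, decP (0 < k /\ Delta_nonempty rho k)) with
  | left H => Some (ex_minn H)
  | right _ => None
  end.

Variable n : nat.

(* H = (E, {X_i : i in [n]}) given by X : 'I_n -> {set E} (a multiset). *)
Definition is_hypergraph (X : 'I_n -> {set E}) : Prop :=
  injective X /\ (forall i, X i != set0).

Definition lg_adj (X : 'I_n -> {set E}) (i j : 'I_n) : bool :=
  (i != j) && (X i :&: X j != set0).

Definition proper_coloring (X : 'I_n -> {set E}) (k : nat) (c : 'I_n -> 'I_k)
  : Prop := forall i j, lg_adj X i j -> c i != c j.

Definition colorable (X : 'I_n -> {set E}) (k : nat) : Prop :=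
  exists c : 'I_n -> 'I_k, proper_coloring X c.

Lemma colorable_exists (X : 'I_n -> {set E}) :
  exists k, decP (0 < k /\ colorable X k).
Proof.
exists n.+1; apply/decPP; split=> //.
exists (widen_ord (leqnSn n)) => i j /andP [ij _].
apply: contra ij => /eqP H; apply/eqP/val_inj; exact: (congr1 val H).
Qed.

Definition chi_line_graph (X : 'I_n -> {set E}) : nat :=
  ex_minn (colorable_exists X).

Definition M_rank (t : 'I_n -> nat) (X : 'I_n -> {set E}) (i : 'I_n) :=
  dsum [:: (X i, unif_rank (t i)); (~: X i, unif_rank 0)].

Definition rho_of (t : 'I_n -> nat) (X : 'I_n -> {set E}) (A : {set E}) :=
  \sum_(i < n) M_rank t X i A.

Definition phi (t : 'I_n -> nat) (X : 'I_n -> {set E}) (k : nat)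
    (c : 'I_n -> 'I_k) (i : 'I_k) : {set E} -> nat :=
  dsum ([seq (X h, unif_rank (t h)) | h <- enum 'I_n & c h == i] ++
        [:: (~: \bigcup_(h | c h == i) X h, unif_rank 0)]).

End Defs.

From Pilot Require Import Defs.
From Stdlib Require Import FunctionalExtensionality ClassicalEpsilon.
From mathcomp Require Import all_boot zify.

Set Implicit Arguments.
Unset Strict Implicit.
Unset Printing Implicit Defensive.

(* The rank of M_h is A |-> min(t_h, |A ∩ X_h|).  In a proper colouring of
   the line graph the X_h of one colour class are pairwise disjoint, so the
   sum of these ranks over a class is the rank of a direct sum of uniform
   matroids, and summing over the classes regroups rho.
   For injectivity, call B a separator of a rank function f when
   f(E) = f(B) + f(E - B).  Under the hypothesis on t, min(t, .) is strictly
   subadditive on two positive summands, so B is a separator of N_i exactly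
   when every X_h of colour i lies inside B or misses it.  If colourings c1
   and c2 give the same N, pick e in X_h: e is not a loop of N_(c1 h), so it
   lies in some X_g with c2 g = c1 h.  Then X_g and X_h are meeting
   separators of the same N_i, so each contains the other, and g = h because
   the X's are distinct. *)

Lemma leqif_minn_add (t u v : nat) :
  t = 1 \/ (0 < t /\ t < u + v) ->
  minn t (u + v) <= minn t u + minn t v ?= iff (u == 0) || (v == 0).
Proof. by move=> ht; split; lia. Qed.

Section SetFunctions.
Variable E : finType.

Definition separator (f : {set E} -> nat) (B : {set E}) : bool :=
  f setT == f B + f (~: B).

Definition trunc_card (t : nat) (Y A : {set E}) : nat := minn t #|A :&: Y|.

Lemma trunc_card_nondecreasing t (Y : {set E}) : nondecreasing (trunc_card t Y).
Proof.
move=> A B sAB; rewrite /trunc_card.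
have : #|A :&: Y| <= #|B :&: Y| by apply/subset_leq_card/setSI.
lia.
Qed.

Lemma trunc_card_submodular t (Y : {set E}) : submodular (trunc_card t Y).
Proof.
move=> A B; rewrite /trunc_card.
have := cardsUI (A :&: Y) (B :&: Y).
rewrite -setIUl setIACA setIid.
have : #|A :&: B :&: Y| <= #|A :&: Y| by apply/subset_leq_card/setSI/subsetIl.
have : #|A :&: B :&: Y| <= #|B :&: Y| by apply/subset_leq_card/setSI/subsetIr.
lia.
Qed.

Lemma leqif_trunc_card_split t (Y B : {set E}) :
  t = 1 \/ (0 < t /\ t < #|Y|) ->
  trunc_card t Y setT <= trunc_card t Y B + trunc_card t Y (~: B)
    ?= iff (B :&: Y == set0) || (Y \subset B).
Proof.
move=> ht; rewrite /trunc_card setTI -setD_eq0 -!cards_eq0 setDE.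
rewrite [B :&: Y]setIC [~: B :&: Y]setIC -setDE -{1}(cardsID B Y).
by apply: leqif_minn_add; rewrite cardsID.
Qed.

Lemma nondecreasing_sum (I : finType) (P : pred I) (F : I -> {set E} -> nat) :
  (forall i, P i -> nondecreasing (F i)) ->
  nondecreasing (fun A => \sum_(i | P i) F i A).
Proof. by move=> FP A B sAB; apply: leq_sum => i Pi; exact: FP. Qed.

Lemma submodular_sum (I : finType) (P : pred I) (F : I -> {set E} -> nat) :
  (forall i, P i -> submodular (F i)) ->
  submodular (fun A => \sum_(i | P i) F i A).
Proof.
by move=> FP A B; rewrite -!big_split; apply: leq_sum => i Pi; exact: FP.
Qed.

Lemma sum_card_disjoint (I : finType) (F : I -> {set E}) :
  (forall i j, i != j -> [disjoint F i & F j]) ->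
  \sum_i #|F i| = #|\bigcup_i F i|.
Proof.
move=> disjF; rewrite -sum1_card partition_disjoint_bigcup //.
by apply: eq_bigr => i _; rewrite sum1_card.
Qed.

End SetFunctions.

Lemma chi_poly_le (E : finType) (rho : {set E} -> nat) (k : nat) :
  0 < k -> Delta_nonempty rho k ->
  exists m, chi_poly rho = Some m /\ m <= k.
Proof.
move=> k_gt0 Dk.
have Pk : Defs.decP (0 < k /\ Delta_nonempty rho k) by apply/decPP.
rewrite /chi_poly; case: excluded_middle_informative => [ex | nex].
  by exists (ex_minn ex); split=> //; case: ex_minnP => m _; apply.
by case: nex; exists k.
Qed.

Lemma chi_line_graph_colorable (E : finType) (n : nat) (X : 'I_n -> {set E}) :
  0 < chi_line_graph X /\ colorable X (chi_line_graph X).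
Proof. by rewrite /chi_line_graph; case: ex_minnP => m /decPP. Qed.

Section ColorClasses.
Variables (E : finType) (n : nat) (X : 'I_n -> {set E}) (t : 'I_n -> nat).

Definition class_rank (k : nat) (c : 'I_n -> 'I_k) (i : 'I_k) (A : {set E}) :=
  \sum_(h | c h == i) trunc_card (t h) (X h) A.

Lemma phiE k (c : 'I_n -> 'I_k) i A : phi t X c i A = class_rank c i A.
Proof.
rewrite /phi /dsum big_cat /= big_cons big_nil /= /unif_rank min0n !addn0.
by rewrite big_map big_filter big_enum_cond.
Qed.

Lemma rho_ofE A : rho_of t X A = \sum_h trunc_card (t h) (X h) A.
Proof.
apply: eq_bigr => h _; rewrite /M_rank /dsum !big_cons big_nil /unif_rank /=.
by rewrite min0n !addn0.
Qed.

Lemma sum_class_rank k (c : 'I_n -> 'I_k) A :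
  \sum_(i < k) class_rank c i A = rho_of t X A.
Proof. by rewrite rho_ofE (partition_big c xpredT). Qed.

Lemma proper_coloring_disjoint k (c : 'I_n -> 'I_k) g h :
  proper_coloring X c -> c g = c h -> g != h -> [disjoint X g & X h].
Proof.
move=> c_proper cgh ngh; rewrite -setI_eq0; apply: contraT => meet.
have adj : lg_adj X g h by rewrite /lg_adj ngh meet.
by have := c_proper _ _ adj; rewrite cgh eqxx.
Qed.

Lemma sum_card_class_le k (c : 'I_n -> 'I_k) i A :
  proper_coloring X c -> \sum_(h | c h == i) #|A :&: X h| <= #|A|.
Proof.
move=> c_proper; pose F h := if c h == i then A :&: X h else set0.
have -> : \sum_(h | c h == i) #|A :&: X h| = \sum_h #|F h|.
  rewrite big_mkcond; apply: eq_bigr => h _.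
  by rewrite /F; case: ifP; rewrite ?cards0.
rewrite sum_card_disjoint.
  apply/subset_leq_card/bigcupsP => h _.
  by rewrite /F; case: ifP; rewrite ?subsetIl ?sub0set.
move=> g h ngh; rewrite /F -setI_eq0.
case: (c g =P i) => [cg|_]; last by rewrite set0I.
case: (c h =P i) => [ch|_]; last by rewrite setI0.
rewrite setI_eq0; apply: disjointW (subsetIr A _) (subsetIr A _) _.
by apply: (proper_coloring_disjoint c_proper _ ngh); rewrite cg ch.
Qed.

Lemma class_rank_matroid k (c : 'I_n -> 'I_k) i :
  proper_coloring X c -> is_matroid_rank (class_rank c i).
Proof.
move=> c_proper; split.
- move=> A; apply: leq_trans (sum_card_class_le i A c_proper).
  by apply: leq_sum => h _; exact: geq_minr.
- by apply: nondecreasing_sum => h _; exact: trunc_card_nondecreasing.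
- by apply: submodular_sum => h _; exact: trunc_card_submodular.
Qed.

Lemma phi_in_Delta k (c : 'I_n -> 'I_k) :
  proper_coloring X c -> in_Delta (rho_of t X) (phi t X c).
Proof.
move=> c_proper; split=> [i | A].
  rewrite (functional_extensionality _ _ (phiE c i)).
  exact: class_rank_matroid.
by rewrite -(sum_class_rank c); apply: eq_bigr => i _; rewrite phiE.
Qed.

Hypothesis t_split : forall i, t i = 1 \/ (0 < t i /\ t i < #|X i|).

Lemma separator_class_rankE k (c : 'I_n -> 'I_k) i B :
  separator (class_rank c i) B =
  [forall (h | c h == i), (B :&: X h == set0) || (X h \subset B)].
Proof.
rewrite /separator /class_rank -big_split /=.
exact: (leqif_sum (fun h _ => leqif_trunc_card_split B (t_split h))).2.
Qed.

Lemma separator_class_rank k (c : 'I_n -> 'I_k) h :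
  proper_coloring X c -> separator (class_rank c (c h)) (X h).
Proof.
move=> c_proper; rewrite separator_class_rankE; apply/forall_inP => g /eqP cg.
have [->|ngh] := eqVneq g h; first by rewrite subxx orbT.
by rewrite setI_eq0 disjoint_sym (proper_coloring_disjoint c_proper cg ngh).
Qed.

Lemma class_rank_set1_gt0 k (c : 'I_n -> 'I_k) i e :
  (0 < class_rank c i [set e]) = [exists (h | c h == i), e \in X h].
Proof.
have t_gt0 h : 0 < t h by case: (t_split h) => [->|[]].
rewrite lt0n sum_nat_eq0 negb_forall; apply: eq_existsb => h.
by rewrite negb_imply -lt0n leq_min t_gt0 card_gt0 setI_eq0 disjoints1 negbK.
Qed.

Lemma classmate_subset k (c1 c2 : 'I_n -> 'I_k) g h :
  proper_coloring X c2 -> class_rank c1 (c1 h) =1 class_rank c2 (c1 h) ->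
  c2 g = c1 h -> X h :&: X g != set0 -> X h \subset X g.
Proof.
move=> c2_proper eq_rank c2g meet.
have : separator (class_rank c1 (c1 h)) (X g).
  by rewrite /separator !eq_rank -c2g; exact: separator_class_rank.
rewrite separator_class_rankE => /forall_inP/(_ h (eqxx _)).
by rewrite setIC (negbTE meet).
Qed.

Lemma class_rank_inj k (c1 c2 : 'I_n -> 'I_k) :
  is_hypergraph X -> proper_coloring X c1 -> proper_coloring X c2 ->
  (forall i, class_rank c1 i =1 class_rank c2 i) -> c1 =1 c2.
Proof.
move=> [X_inj X_neq0] c1_proper c2_proper eq_rank h.
have /set0Pn[e eXh] := X_neq0 h.
have /existsP[g /andP[/eqP c2g eXg]] : [exists (g | c2 g == c1 h), e \in X g].
  rewrite -class_rank_set1_gt0 -eq_rank class_rank_set1_gt0.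
  by apply/existsP; exists h; rewrite eqxx eXh.
have meet : X h :&: X g != set0 by apply/set0Pn; exists e; rewrite inE eXh eXg.
have sXhg := classmate_subset c2_proper (eq_rank _) c2g meet.
have sXgh : X g \subset X h.
  apply: (classmate_subset c1_proper (fun A => esym (eq_rank _ A)) (esym c2g)).
  by rewrite setIC.
have gh : g = h by apply: X_inj; apply/eqP; rewrite eqEsubset sXgh sXhg.
by move: c2g; rewrite gh => ->.
Qed.

End ColorClasses.

Theorem lemma2p8 (E : finType) (n : nat) (X : 'I_n -> {set E})
    (t : 'I_n -> nat) (ht : forall i, t i <= #|X i|) :
  (forall (k : nat) (c : 'I_n -> 'I_k), 0 < k -> proper_coloring X c ->
     in_Delta (rho_of t X) (phi t X c))
  /\ (exists m, chi_poly (rho_of t X) = Some m /\ m <= chi_line_graph X)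
  /\ (is_hypergraph X ->
      (forall i, t i = 1 \/ (0 < t i /\ t i < #|X i|)) ->
      forall (k : nat) (c1 c2 : 'I_n -> 'I_k),
        0 < k -> proper_coloring X c1 -> proper_coloring X c2 ->
        (forall (i : 'I_k) (A : {set E}), phi t X c1 i A = phi t X c2 i A) ->
        forall h, c1 h = c2 h).
Proof.
split; first by move=> k c _; exact: phi_in_Delta.
split.
  have [chi_gt0 [c c_proper]] := chi_line_graph_colorable X.
  by apply: chi_poly_le chi_gt0 _; exists (phi t X c); exact: phi_in_Delta.
move=> X_hyp t_split k c1 c2 _ c1_proper c2_proper eq_phi.
apply: (class_rank_inj t_split X_hyp c1_proper c2_proper) => i A.
by rewrite -!phiE.
Qed.
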